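(* Let $X,Y$ be finite sets, $\mu\in\mathcal P(X)$, $\nu\in\mathcal P(Y)$, $M$ a positive integer, and $\pi_1,\pi_2\in\Pi(\mu,\nu)$. Define the assignment graph as the bipartite directed graph on vertex set $X\sqcup Y$ with edge set $\{x\to y:\pi_2(x,y)\ge\mu(x)\nu(y)/M\}\sqcup\{y\to x:\pi_1(x,y)\ge\mu(x)\nu(y)/M\}$. Then: (i) every vertex has at least one incoming and at least one outgoing edge; (ii) if $X_0\subset X$, $Y_0\subset Y$ are such that there is no edge from $X_0\cup Y_0$ to a vertex outside $X_0\cup Y_0$, then $|\mu(X_0)-\nu(Y_0)|<1/M$; the same holds if there is no edge from a vertex outside $X_0\cup Y_0$ into $X_0\cup Y_0$; if moreover $\mu=r/M$, $\nu=s/M$ with $r\in\mathbb Z_{++}^X$, $s\in\mathbb Z_{++}^Y$, then $\mu(X_0)=\nu(Y_0)$; (iii) if $\mu=r/M$, $\nu=s/M$ with $r\in\mathbb Z_{++}^X$, $s\in\mathbb Z_{++}^Y$, and $\{(X_i,Y_i)\}_{i=1}^R$ are the vertex sets of the strongly connected components of the assignment graph (each $X_i\subset X$, $Y_i\subset Y$), then $\{X_i\}_{i=1}^R$ and $\{Y_i\}_{i=1}^R$ are partitions of $X$ and $Y$ and $\mu(X_i)=\nu(Y_i)$ for $i=1,\dots,R$.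
   Context: $\Pi(\mu,\nu)=\{\pi\in\mathbb R_+^{X\times Y}:\sum_y\pi(x,y)=\mu(x)\ \forall x,\ \sum_x\pi(x,y)=\nu(y)\ \forall y\}$. For $A\subset X$, $\mu(A)=\sum_{x\in A}\mu(x)$. $\mathbb Z_{++}$ denotes strictly positive integers. *)

From HB Require Import structures.
From mathcomp Require Import all_boot all_order all_algebra.
Set Implicit Arguments. Unset Strict Implicit. Unset Printing Implicit Defensive.
Import Order.TTheory GRing.Theory Num.Theory.
Local Open Scope ring_scope.

Section Defs.
Variable R : realFieldType.

Definition is_prob (X : finType) (mu : X -> R) : Prop :=
  (forall x, 0 <= mu x) /\ \sum_(x : X) mu x = 1.

Definition mass (X : finType) (mu : X -> R) (A : {set X}) : R :=
  \sum_(x in A) mu x.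

Definition coupling (X Y : finType) (mu : X -> R) (nu : Y -> R)
    (pi : X -> Y -> R) : Prop :=
  [/\ forall x y, 0 <= pi x y,
      forall x, \sum_(y : Y) pi x y = mu x &
      forall y, \sum_(x : X) pi x y = nu y].

Definition assign_edge (X Y : finType) (mu : X -> R) (nu : Y -> R) (M : nat)
    (pi1 pi2 : X -> Y -> R) : rel (X + Y)%type :=
  fun u v =>
    match u, v with
    | inl x, inr y => mu x * nu y / M%:R <= pi2 x y
    | inr y, inl x => mu x * nu y / M%:R <= pi1 x y
    | _, _ => false
    end.
End Defs.

Definition vset (X Y : finType) (X0 : {set X}) (Y0 : {set Y}) : {set (X + Y)%type} :=
  [set u | match u with inl x => x \in X0 | inr y => y \in Y0 end].

Definition xpart (X Y : finType) (C : {set (X + Y)%type}) : {set X} :=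
  [set x | inl x \in C].
Definition ypart (X Y : finType) (C : {set (X + Y)%type}) : {set Y} :=
  [set y | inr y \in C].

Definition scc (T : finType) (e : rel T) (v : T) : {set T} :=
  [set w | connect e v w && connect e w v].
Definition sccs (T : finType) (e : rel T) : {set {set T}} :=
  [set scc e v | v : T].

(* For any coupling pi of mu and nu, the imbalance mu(X0) - nu(Y0) equals the net flow
   pi(X0 x Y0^c) - pi(X0^c x Y0).  On a block carrying no edge of the assignment graph
   pi < mu (x) nu / M, so the block has pi-mass below 1/M.  A vertex set without outgoing
   edges kills the block X0 x Y0^c for pi2 and the block X0^c x Y0 for pi1, whence
   |mu(X0) - nu(Y0)| < 1/M, an equality when all masses are multiples of 1/M; sets without
   incoming edges are the same for the reversed graph, i.e. with pi1 and pi2 exchanged.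
   Every vertex has edges because the row pi(x, .) and mu(x) nu(.) have the same total.
   A strongly connected component is the difference of two out-closed sets, the
   descendants of a vertex and those descendants that do not reach back to it, so its two
   halves balance too; with positive weights neither half can then be empty. *)

From HB Require Import structures.
From mathcomp Require Import all_boot all_order all_algebra.
From mathcomp Require Import lra.
Import Order.TTheory GRing.Theory Num.Theory.
Local Open Scope ring_scope.

Set Implicit Arguments.
Unset Strict Implicit.
Unset Printing Implicit Defensive.

Section Graph.
Variables (T : finType) (e : rel T).

Definition out_closed (S : {set T}) := forall u v, u \in S -> e u v -> v \in S.

Lemma mem_scc v : v \in scc e v.
Proof. by rewrite inE connect0. Qed.

Lemma sccs_partition : partition (sccs e) [set: T].
Proof.
pose R := [rel v w | connect e v w && connect e w v].
have -> : sccs e = equivalence_partition R [set: T].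
  apply/setP => C; apply/imsetP/imsetP => -[v _ ->]; exists v => //;
  by apply/setP => w; rewrite !inE.
apply: equivalence_partitionP => u v w _ _ _ /=.
rewrite connect0; split=> // /andP[uv vu].
by apply/andP/andP => -[vw wv]; split; apply: connect_trans; eassumption.
Qed.

Lemma out_closed_descendants v : out_closed [set w | connect e v w].
Proof. by move=> u w; rewrite !inE => vu /connect1; apply: connect_trans. Qed.

Lemma out_closed_strict_descendants v :
  out_closed [set w | connect e v w && ~~ connect e w v].
Proof.
move=> u w; rewrite !inE => /andP[vu uv] /connect1 uw.
rewrite (connect_trans vu uw); apply: contra uv; exact: connect_trans.
Qed.

Lemma scc_sum_eq0 (V : nmodType) (w : T -> V) :
  (forall S, out_closed S -> \sum_(u in S) w u = 0) ->
  forall C, C \in sccs e -> \sum_(u in C) w u = 0.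
Proof.
move=> closed0 _ /imsetP[v _ ->].
set D := [set u | connect e v u]; set D' := [set u | connect e v u && ~~ connect e u v].
have -> : scc e v = D :\: D'.
  by apply/setP => u; rewrite !inE; case: (connect e v u); case: (connect e u v).
have /setIidPr DD' : D' \subset D by apply/subsetP => u; rewrite !inE => /andP[].
have := closed0 D (@out_closed_descendants v).
by rewrite (big_setID D') DD' (closed0 D' (@out_closed_strict_descendants v)) /= add0r.
Qed.

End Graph.

Lemma partition_preimset (X T : finType) (f : X -> T) (P : {set {set T}}) :
  partition P [set: T] -> {in P, forall B : {set T}, f @^-1: B != set0} ->
  partition [set f @^-1: B | B : {set T} in P] [set: X].
Proof.
move=> /and3P[/eqP coverP /trivIsetP trivP _] nonempty; apply/and3P; split.
- apply/eqP/setP => x; rewrite inE; apply/bigcupP.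
  have : f x \in cover P by rewrite coverP inE.
  by case/bigcupP => B BP fxB; exists (f @^-1: B); [apply: imset_f | rewrite inE].
- apply/trivIsetP => _ _ /imsetP[B1 B1P ->] /imsetP[B2 B2P ->] neq.
  have B12 : B1 != B2 by apply: contraNneq neq => ->.
  by rewrite -setI_eq0 -preimsetI (disjoint_setI0 (trivP _ _ B1P B2P B12)) preimset0.
- by apply/imsetP => -[B BP /esym/eqP]; apply/negP; apply: nonempty.
Qed.

Lemma sum_setC (V : nmodType) (T : finType) (B : {set T}) (F : T -> V) :
  \sum_i F i = \sum_(i in B) F i + \sum_(i in ~: B) F i.
Proof. by rewrite (bigID (mem B)) /=; congr (_ + _); apply: eq_bigl => i; rewrite inE. Qed.

Section Mass.
Variables (R : realFieldType) (X : finType) (mu : X -> R).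

Lemma mass_le1 A : is_prob mu -> mass mu A <= 1.
Proof. by case=> mu_ge0 <-; rewrite (sum_setC A) lerDl sumr_ge0. Qed.

Lemma mass_ge0 A : (forall x, 0 <= mu x) -> 0 <= mass mu A.
Proof. by move=> mu_ge0; apply: sumr_ge0. Qed.

Lemma mass_eq0 A : (forall x, 0 < mu x) -> (mass mu A == 0) = (A == set0).
Proof.
move=> mu_gt0; apply/eqP/eqP => [A0|->]; last by rewrite /mass big_set0.
apply/setP => x; rewrite inE; apply/negbTE/negP => xA.
by move: (psumr_eq0P (fun y _ => ltW (mu_gt0 y)) A0 xA) => /eqP; rewrite gt_eqF.
Qed.

Lemma prob_support : is_prob mu -> exists x, 0 < mu x.
Proof.
case=> mu_ge0 mu1; have : \sum_x mu x <> 0 by rewrite mu1; apply/eqP; exact: oner_neq0.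
by move=> /(psumr_neq0P (fun x _ => mu_ge0 x))[x /andP[_ mu_x]]; exists x.
Qed.

End Mass.

Lemma block_sum_lt (R : realFieldType) (X Y : finType) (mu : X -> R) (nu : Y -> R)
    (pi : X -> Y -> R) (c : R) (A : {set X}) (B : {set Y}) :
  is_prob mu -> is_prob nu -> 0 < c ->
  (forall x y, x \in A -> y \in B -> pi x y < mu x * nu y * c) ->
  \sum_(x in A) \sum_(y in B) pi x y < c.
Proof.
move=> mu_prob nu_prob c_gt0 lt_pi.
have [->|[x0 x0A]] := set_0Vmem A; first by rewrite big_set0.
have [->|[y0 y0B]] := set_0Vmem B; first by rewrite big1 // => x _; rewrite big_set0.
apply: (@lt_le_trans _ _ (mass mu A * mass nu B * c)).
  rewrite /mass big_distrlr mulr_suml; apply: ltr_sum => [|x xA].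
    by apply/hasP; exists x0; rewrite ?mem_index_enum.
  rewrite mulr_suml; apply: ltr_sum => [|y yB]; last exact: lt_pi.
  by apply/hasP; exists y0; rewrite ?mem_index_enum.
apply: ler_piMl; first exact: ltW.
rewrite -[1]mulr1; apply: ler_pM; try exact: mass_le1.
  exact: mass_ge0 (proj1 mu_prob).
exact: mass_ge0 (proj1 nu_prob).
Qed.

Section Coupling.
Variables (R : realFieldType) (X Y : finType) (mu : X -> R) (nu : Y -> R).
Variable pi : X -> Y -> R.
Hypothesis pi_cpl : coupling mu nu pi.

Lemma coupling_transpose : coupling nu mu (fun y x => pi x y).
Proof. by case: pi_cpl. Qed.

Lemma mass_subB_flow (A : {set X}) (B : {set Y}) :
  mass mu A - mass nu B =
  \sum_(x in A) \sum_(y in ~: B) pi x y - \sum_(x in ~: A) \sum_(y in B) pi x y.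
Proof.
case: pi_cpl => _ rowE colE.
have -> : mass mu A =
    \sum_(x in A) \sum_(y in B) pi x y + \sum_(x in A) \sum_(y in ~: B) pi x y.
  by rewrite -big_split; apply: eq_bigr => x _; rewrite -rowE (sum_setC B).
have -> : mass nu B =
    \sum_(x in A) \sum_(y in B) pi x y + \sum_(x in ~: A) \sum_(y in B) pi x y.
  rewrite -(sum_setC A (fun x => \sum_(y in B) pi x y)) exchange_big.
  by apply: eq_bigr => y _; rewrite colE.
by rewrite opprD addrACA subrr add0r.
Qed.

Lemma coupling_block_ge0 (A : {set X}) (B : {set Y}) :
  0 <= \sum_(x in A) \sum_(y in B) pi x y.
Proof. by case: pi_cpl => pi_ge0 _ _; do 2!apply: sumr_ge0 => ? _. Qed.

Lemma mass_subB_lt (c : R) (A : {set X}) (B : {set Y}) :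
  \sum_(x in A) \sum_(y in ~: B) pi x y < c -> mass mu A - mass nu B < c.
Proof. by rewrite mass_subB_flow; have := coupling_block_ge0 (~: A) B; lra. Qed.

Lemma mass_subB_gt (c : R) (A : {set X}) (B : {set Y}) :
  \sum_(x in ~: A) \sum_(y in B) pi x y < c -> - c < mass mu A - mass nu B.
Proof. by rewrite mass_subB_flow; have := coupling_block_ge0 A (~: B); lra. Qed.

Lemma coupling_row_ge x : is_prob nu -> exists y, mu x * nu y <= pi x y.
Proof.
move=> nu_prob; have [y0 _] := prob_support nu_prob.
have [/existsP[y le_y]|/existsPn lt_all] := boolP [exists y, mu x * nu y <= pi x y].
  by exists y.
have : \sum_y pi x y < \sum_y mu x * nu y.
  apply: ltr_sum => [|y _]; last by rewrite ltNge lt_all.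
  by apply/hasP; exists y0; rewrite ?mem_index_enum.
by case: pi_cpl nu_prob => _ -> _ [_ nu1]; rewrite -mulr_sumr nu1 mulr1 ltxx.
Qed.

End Coupling.

Lemma coupling_col_ge (R : realFieldType) (X Y : finType) (mu : X -> R) (nu : Y -> R)
    (pi : X -> Y -> R) y :
  coupling mu nu pi -> is_prob mu -> exists x, mu x * nu y <= pi x y.
Proof.
move=> pi_cpl mu_prob.
have [x le_x] := coupling_row_ge (coupling_transpose pi_cpl) y mu_prob.
by exists x; rewrite mulrC.
Qed.

Lemma natr_dist_lt1 (R : realDomainType) (a b : nat) : `|a%:R - b%:R : R| < 1 -> a = b.
Proof.
rewrite ltr_norml => /andP[lo hi].
have [||//] := ltngtP a b; rewrite -(ler_nat R) -natr1 => ?; exfalso; lra.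
Qed.

Lemma mass_natr (R : realFieldType) (X : finType) (mu : X -> R) (r : X -> nat) (n : nat) A :
  (forall x, mu x = (r x)%:R / n%:R) -> mass mu A = (\sum_(x in A) r x)%:R / n%:R.
Proof. by move=> mu_r; rewrite natr_sum mulr_suml; apply: eq_bigr => x _. Qed.

Lemma mass_eq_of_gap (R : realFieldType) (X Y : finType) (mu : X -> R) (nu : Y -> R)
    (r : X -> nat) (s : Y -> nat) (M : nat) A B :
  (0 < M)%N -> (forall x, mu x = (r x)%:R / M%:R) -> (forall y, nu y = (s y)%:R / M%:R) ->
  `|mass mu A - mass nu B| < 1 / M%:R -> mass mu A = mass nu B.
Proof.
move=> M_gt0 mu_r nu_s; rewrite (mass_natr A mu_r) (mass_natr B nu_s) => gap.
congr (_%:R / _); apply: (natr_dist_lt1 (R := R)).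
by move: gap; rewrite -mulrBl normrM normfV normr_nat ltr_pM2r ?invr_gt0 ?ltr0n.
Qed.

Lemma vset_parts (X Y : finType) (S : {set X + Y}) : vset (xpart S) (ypart S) = S.
Proof. by apply/setP => -[x|y]; rewrite !inE. Qed.

Definition signed_weight (R : zmodType) (X Y : finType) (mu : X -> R) (nu : Y -> R)
    (v : X + Y) : R :=
  match v with inl x => mu x | inr y => - nu y end.

Lemma sum_signed_weight (R : realFieldType) (X Y : finType) (mu : X -> R) (nu : Y -> R)
    (S : {set X + Y}) :
  \sum_(v in S) signed_weight mu nu v = mass mu (xpart S) - mass nu (ypart S).
Proof.
by rewrite big_sumType sumrN; congr (_ - _); apply: eq_bigl => ?; rewrite inE.
Qed.

Lemma assign_edge_swap (R : realFieldType) (X Y : finType) (mu : X -> R) (nu : Y -> R)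
    (M : nat) (pi1 pi2 : X -> Y -> R) u v :
  assign_edge mu nu M pi2 pi1 u v = assign_edge mu nu M pi1 pi2 v u.
Proof. by case: u v => [x|y] [x'|y']. Qed.

Section AssignmentGraph.
Variables (R : realFieldType) (X Y : finType) (mu : X -> R) (nu : Y -> R) (M : nat).
Variables pi1 pi2 : X -> Y -> R.
Hypotheses (mu_prob : is_prob mu) (nu_prob : is_prob nu) (M_gt0 : (0 < M)%N).
Hypotheses (pi1_cpl : coupling mu nu pi1) (pi2_cpl : coupling mu nu pi2).

Local Notation e := (assign_edge mu nu M pi1 pi2).

Lemma assign_edge_in_out v : (exists u, e u v) /\ (exists w, e v w).
Proof.
have scaled_le x y : mu x * nu y / M%:R <= mu x * nu y.
  rewrite ler_pdivrMr ?ltr0n //; apply: ler_peMr; last by rewrite ler1n.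
  by apply: mulr_ge0; [apply: (proj1 mu_prob) | apply: (proj1 nu_prob)].
case: v => [x|y]; split.
- have [y le_y] := coupling_row_ge pi1_cpl x nu_prob.
  by exists (inr y); apply: le_trans le_y.
- have [y le_y] := coupling_row_ge pi2_cpl x nu_prob.
  by exists (inr y); apply: le_trans le_y.
- have [x le_x] := coupling_col_ge y pi2_cpl mu_prob.
  by exists (inl x); apply: le_trans le_x.
- have [x le_x] := coupling_col_ge y pi1_cpl mu_prob.
  by exists (inl x); apply: le_trans le_x.
Qed.

Lemma out_closed_mass_gap X0 Y0 :
  out_closed e (vset X0 Y0) -> `|mass mu X0 - mass nu Y0| < 1 / M%:R.
Proof.
move=> closed; have invM_gt0 : 0 < M%:R^-1 :> R by rewrite invr_gt0 ltr0n.
rewrite div1r ltr_norml; apply/andP; split.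
  apply: (mass_subB_gt pi1_cpl); apply: (block_sum_lt mu_prob nu_prob invM_gt0) => x y.
  rewrite inE => xX0 yY0; rewrite ltNge; apply: contraNN xX0 => edge.
  by have := closed (inr y) (inl x); rewrite !inE; apply.
apply: (mass_subB_lt pi2_cpl); apply: (block_sum_lt mu_prob nu_prob invM_gt0) => x y xX0.
rewrite inE => yY0; rewrite ltNge; apply: contraNN yY0 => edge.
by have := closed (inl x) (inr y); rewrite !inE; apply.
Qed.

Section IntegerMarginals.
Variables (r : X -> nat) (s : Y -> nat).
Hypotheses (mu_r : forall x, mu x = (r x)%:R / M%:R) (nu_s : forall y, nu y = (s y)%:R / M%:R).

Lemma out_closed_mass_balanced S : out_closed e S -> mass mu (xpart S) = mass nu (ypart S).
Proof.
move=> closed; apply: (mass_eq_of_gap M_gt0 mu_r nu_s).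
by apply: out_closed_mass_gap; rewrite vset_parts.
Qed.

Lemma scc_mass_balanced C : C \in sccs e -> mass mu (xpart C) = mass nu (ypart C).
Proof.
move=> sccC; apply/eqP; rewrite -subr_eq0 -sum_signed_weight; apply/eqP.
apply: (scc_sum_eq0 _ sccC) => S closed.
by rewrite sum_signed_weight out_closed_mass_balanced ?subrr.
Qed.

Hypotheses (r_gt0 : forall x, (0 < r x)%N) (s_gt0 : forall y, (0 < s y)%N).

Lemma scc_parts_neq0 C : C \in sccs e -> xpart C != set0 /\ ypart C != set0.
Proof.
move=> sccC; have mu_gt0 x : 0 < mu x by rewrite mu_r divr_gt0 ?ltr0n.
have nu_gt0 y : 0 < nu y by rewrite nu_s divr_gt0 ?ltr0n.
have parts_eq0 : (xpart C == set0) = (ypart C == set0).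
  by rewrite -(mass_eq0 _ mu_gt0) -(mass_eq0 _ nu_gt0) scc_mass_balanced.
have : (xpart C != set0) || (ypart C != set0).
  case/imsetP: sccC => -[x|y] _ ->; apply/orP;
    [left; apply/set0Pn; exists x | right; apply/set0Pn; exists y]; by rewrite inE mem_scc.
by rewrite parts_eq0 orbb.
Qed.

End IntegerMarginals.

End AssignmentGraph.

Lemma closed_mass_gap (R : realFieldType) (X Y : finType) (mu : X -> R) (nu : Y -> R)
    (M : nat) (pi1 pi2 : X -> Y -> R) X0 Y0 :
  is_prob mu -> is_prob nu -> (0 < M)%N -> coupling mu nu pi1 -> coupling mu nu pi2 ->
  let e := assign_edge mu nu M pi1 pi2 in
  out_closed e (vset X0 Y0) \/ (forall u v, v \in vset X0 Y0 -> e u v -> u \in vset X0 Y0) ->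
  `|mass mu X0 - mass nu Y0| < 1 / M%:R.
Proof.
move=> mu_prob nu_prob M_gt0 pi1_cpl pi2_cpl e [|in_closed].
  exact: out_closed_mass_gap.
apply: (out_closed_mass_gap mu_prob nu_prob M_gt0 pi2_cpl pi1_cpl) => u v uS.
by rewrite assign_edge_swap; apply: in_closed.
Qed.

Theorem mainTheorem7 (R : realFieldType) (X Y : finType)
  (mu : X -> R) (nu : Y -> R) (M : nat) (pi1 pi2 : X -> Y -> R) :
  is_prob mu -> is_prob nu -> (0 < M)%N ->
  coupling mu nu pi1 -> coupling mu nu pi2 ->
  let e := assign_edge mu nu M pi1 pi2 in
  (* (i) *)
  (forall v, (exists u, e u v) /\ (exists w, e v w)) /\
  (* (ii) *)
  (forall (X0 : {set X}) (Y0 : {set Y}),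
     let S := vset X0 Y0 in
     (forall u v, u \in S -> e u v -> v \in S) \/
     (forall u v, v \in S -> e u v -> u \in S) ->
     `|mass mu X0 - mass nu Y0| < 1 / M%:R /\
     (forall (r : X -> nat) (s : Y -> nat),
        (forall x, (0 < r x)%N) -> (forall y, (0 < s y)%N) ->
        (forall x, mu x = (r x)%:R / M%:R) ->
        (forall y, nu y = (s y)%:R / M%:R) ->
        mass mu X0 = mass nu Y0)) /\
  (* (iii) *)
  (forall (r : X -> nat) (s : Y -> nat),
     (forall x, (0 < r x)%N) -> (forall y, (0 < s y)%N) ->
     (forall x, mu x = (r x)%:R / M%:R) ->
     (forall y, nu y = (s y)%:R / M%:R) ->
     partition [set xpart C | C in sccs e] [set: X] /\
     partition [set ypart C | C in sccs e] [set: Y] /\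
     (forall C, C \in sccs e -> mass mu (xpart C) = mass nu (ypart C))).
Proof.
move=> mu_prob nu_prob M_gt0 pi1_cpl pi2_cpl e.
have gap := closed_mass_gap mu_prob nu_prob M_gt0 pi1_cpl pi2_cpl.
split; first exact: assign_edge_in_out.
split=> [X0 Y0 S closed | r s r_gt0 s_gt0 mu_r nu_s].
  split=> [|r s _ _ mu_r nu_s]; first exact: gap.
  exact: mass_eq_of_gap M_gt0 mu_r nu_s (gap _ _ closed).
have parts_neq0 := scc_parts_neq0 mu_prob nu_prob M_gt0 pi1_cpl pi2_cpl mu_r nu_s r_gt0 s_gt0.
have balanced := scc_mass_balanced mu_prob nu_prob M_gt0 pi1_cpl pi2_cpl mu_r nu_s.
split; [|split]; last exact: balanced.
  by apply: (@partition_preimset _ _ inl _ (sccs_partition e)) => C /parts_neq0[].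
by apply: (@partition_preimset _ _ inr _ (sccs_partition e)) => C /parts_neq0[].
Qed.
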